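(* Consider the linear (ReLU-free) encoder-decoder network described in the context. Fix $\alpha>0$. (1) (No skipped connection.) Suppose that for all $l\in[\kappa]$, $$\tilde\Phi^l\Phi^{l\top}=\alpha I_{m_{l-1}},\qquad \Psi^l\tilde\Psi^{l\top}=\frac{1}{r\alpha}I_{rq_{l-1}}.$$ Then, with $B=E^1E^2\cdots E^\kappa\in\mathbb R^{d_0\times d_\kappa}$ and $\tilde B=D^1D^2\cdots D^\kappa\in\mathbb R^{d_0\times d_\kappa}$, with columns $b_i,\tilde b_i$, one has $\tilde BB^\top=I_{d_0}$, i.e. $x=\sum_i\langle b_i,x\rangle\tilde b_i$ for every $x\in\mathbb R^{d_0}$; moreover the linear network without skipped connections satisfies $F(x)=\tilde BB^\top x$. (2) (With skipped connections.) Suppose that for all $l\in[\kappa]$, $$\tilde\Phi^l\Phi^{l\top}=\alpha I_{m_{l-1}},\qquad \Psi^l\tilde\Psi^{l\top}=\frac{1}{r(\alpha+1)}I_{rq_{l-1}}.$$ Define the $d_0\times(d_\kappa+\sum_{l=1}^\kappa s_l)$ matrices $$B^{skp}=\big[\,E^1\cdots E^\kappa,\ E^1\cdots E^{\kappa-1}S^\kappa,\ \dots,\ E^1S^2,\ S^1\,\big],\qquad \tilde B^{skp}=\big[\,D^1\cdots D^\kappa,\ D^1\cdots D^{\kappa-1}\tilde S^\kappa,\ \dots,\ D^1\tilde S^2,\ \tilde S^1\,\big].$$ Then the linear network with skipped connections satisfies $F(x)=\tilde B^{skp}B^{skp\top}x$, and $\tilde B^{skp}B^{skp\top}=I_{d_0}$,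 i.e. $x=\sum_i\langle b_i,x\rangle\tilde b_i$ with $b_i,\tilde b_i$ the columns of $B^{skp},\tilde B^{skp}$.
   Context: Conventions. For $m\ge1$, vectors in $\mathbb R^m$ are indexed $0,\dots,m-1$ with indices taken modulo $m$. For $u,v\in\mathbb R^m$ the circular convolution is $(u\circledast v)[n]=\sum_{k=0}^{m-1}u[k]\,v[n-k]$; a vector of length $r\le m$ is identified with its zero-padding to length $m$ when convolved with length-$m$ vectors. For a matrix $A=[a_1\cdots a_p]\in\mathbb R^{m\times p}$ and $\psi\in\mathbb R^r$, $A\circledast\psi:=[a_1\circledast\psi\ \cdots\ a_p\circledast\psi]\in\mathbb R^{m\times p}$. $[n]=\{1,\dots,n\}$. Architecture. Fix depth $\kappa\ge1$, channel numbers $q_0,\dots,q_\kappa$, channel lengths $m_0,\dots,m_\kappa$ and a filter length $r$ with $r\le m_l$ for all $l$; set $d_l=m_lq_l$ and $s_l=m_{l-1}q_l$. For each $l\in[\kappa]$ there are encoder filters $\psi^l_{j,k}\in\mathbb R^r$ ($j\in[q_l]$, $k\in[q_{l-1}]$), a pooling matrix $\Phi^l\in\mathbb R^{m_{l-1}\times m_l}$, decoder filters $\tilde\psi^l_{j,k}\in\mathbb R^r$ ($j\in[q_{l-1}]$, $k\in[q_l]$) and an unpooling matrix $\tilde\Phi^l\in\mathbb R^{m_{l-1}\times m_l}$. Define block matrices: $E^l\in\mathbb R^{d_{l-1}\times d_l}$ with $(k,j)$ block ($k\in[q_{l-1}],j\in[q_l]$) equal to $\Phi^l\circledast\psi^l_{j,k}$;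 $D^l\in\mathbb R^{d_{l-1}\times d_l}$ with $(j,k)$ block ($j\in[q_{l-1}],k\in[q_l]$) equal to $\tilde\Phi^l\circledast\tilde\psi^l_{j,k}$; $S^l\in\mathbb R^{d_{l-1}\times s_l}$ with $(k,j)$ block $I_{m_{l-1}}\circledast\psi^l_{j,k}$; $\tilde S^l\in\mathbb R^{d_{l-1}\times s_l}$ with $(j,k)$ block $I_{m_{l-1}}\circledast\tilde\psi^l_{j,k}$. Filter matrices: $\Psi^l\in\mathbb R^{rq_{l-1}\times q_l}$ whose $(k,j)$ block (an $r\times1$ column) is $\psi^l_{j,k}$, and $\tilde\Psi^l\in\mathbb R^{rq_{l-1}\times q_l}$ whose $(j,k)$ block is $\tilde\psi^l_{j,k}$. Linear network (no ReLU). Without skipped connections: $\xi^0=x\in\mathbb R^{d_0}$, $\xi^l=E^{l\top}\xi^{l-1}$ ($l\in[\kappa]$), $\tilde\xi^\kappa=\xi^\kappa$, $\tilde\xi^{l-1}=D^l\tilde\xi^l$, $F(x)=\tilde\xi^0$. With skipped connections: additionally $\chi^l=S^{l\top}\xi^{l-1}$ and the decoder is $\tilde\xi^{l-1}=D^l\tilde\xi^l+\tilde S^l\chi^l$, $F(x)=\tilde\xi^0$. *)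

From HB Require Import structures.
From mathcomp Require Import all_boot all_order all_algebra.
Unset Printing Implicit Defensive.
Import Order.TTheory GRing.Theory Num.Theory.
Local Open Scope ring_scope.

(* Entry [i] of a vector v of length m, with index taken as a natural
   number; out-of-range indices give 0 (this is exactly zero-padding). *)
Definition vget (R : pzRingType) (m : nat) (v : 'cV[R]_m) (i : nat) : R :=
  if (insub i : option 'I_m) is Some t then v t 0 else 0.

Definition zpad (R : pzRingType) (m r : nat) (psi : 'cV[R]_r) : 'cV[R]_m :=
  \col_(i < m) @vget _ _ psi i.

Definition cconv (R : pzRingType) (m : nat) (u v : 'cV[R]_m) : 'cV[R]_m :=
  \col_(n < m) \sum_(k < m) u k 0 * @vget _ _ v ((n + m - k) %% m).

Definition mxconv (R : pzRingType) (m p r : nat) (A : 'M[R]_(m, p))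
  (psi : 'cV[R]_r) : 'M[R]_(m, p) :=
  \matrix_(i < m, j < p) @cconv _ _ (col j A) (@zpad _ m _ psi) i 0.

(* d_l = m_l q_l, realised as the block dimension sum_{k < q_l} m_l *)
Definition dimL (q m : nat -> nat) (l : nat) : nat := (\sum_(k < q l) m l)%N.
Definition sdimL (q m : nat -> nat) (l : nat) : nat := (\sum_(j < q l) m l.-1)%N.

Definition Emx (R : pzRingType) (r : nat) (q m : nat -> nat)
  (Phi : forall l, 'M[R]_(m l.-1, m l))
  (psi : forall l, 'I_(q l) -> 'I_(q l.-1) -> 'cV[R]_r) (l : nat)
  : 'M[R]_(dimL q m l.-1, dimL q m l) :=
  \mxblock_(k < q l.-1, j < q l) @mxconv _ _ _ _ (Phi l) (psi l j k).

Definition Dmx (R : pzRingType) (r : nat) (q m : nat -> nat)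
  (tPhi : forall l, 'M[R]_(m l.-1, m l))
  (tpsi : forall l, 'I_(q l.-1) -> 'I_(q l) -> 'cV[R]_r) (l : nat)
  : 'M[R]_(dimL q m l.-1, dimL q m l) :=
  \mxblock_(j < q l.-1, k < q l) @mxconv _ _ _ _ (tPhi l) (tpsi l j k).

Definition Smx (R : pzRingType) (r : nat) (q m : nat -> nat)
  (psi : forall l, 'I_(q l) -> 'I_(q l.-1) -> 'cV[R]_r) (l : nat)
  : 'M[R]_(dimL q m l.-1, sdimL q m l) :=
  \mxblock_(k < q l.-1, j < q l) @mxconv _ _ _ _ (1%:M : 'M[R]_(m l.-1)) (psi l j k).

Definition tSmx (R : pzRingType) (r : nat) (q m : nat -> nat)
  (tpsi : forall l, 'I_(q l.-1) -> 'I_(q l) -> 'cV[R]_r) (l : nat)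
  : 'M[R]_(dimL q m l.-1, sdimL q m l) :=
  \mxblock_(j < q l.-1, k < q l) @mxconv _ _ _ _ (1%:M : 'M[R]_(m l.-1)) (tpsi l j k).

Definition Psimx (R : pzRingType) (r : nat) (q : nat -> nat)
  (psi : forall l, 'I_(q l) -> 'I_(q l.-1) -> 'cV[R]_r) (l : nat)
  : 'M[R]_(\sum_(k < q l.-1) r, \sum_(j < q l) 1) :=
  \mxblock_(k < q l.-1, j < q l) psi l j k.

Definition tPsimx (R : pzRingType) (r : nat) (q : nat -> nat)
  (tpsi : forall l, 'I_(q l.-1) -> 'I_(q l) -> 'cV[R]_r) (l : nat)
  : 'M[R]_(\sum_(j < q l.-1) r, \sum_(k < q l) 1) :=
  \mxblock_(j < q l.-1, k < q l) tpsi l j k.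

Fixpoint chain (R : pzRingType) (q m : nat -> nat)
  (M : forall l, 'M[R]_(dimL q m l.-1, dimL q m l)) (n : nat)
  : 'M[R]_(dimL q m 0, dimL q m n) :=
  match n return 'M[R]_(dimL q m 0, dimL q m n) with
  | 0 => 1%:M
  | n'.+1 => @chain _ _ _ M n' *m M n'.+1
  end.

Fixpoint ssum (q m : nat -> nat) (n : nat) : nat :=
  match n with 0 => 0%N | n'.+1 => (sdimL q m n'.+1 + ssum q m n')%N end.

Fixpoint skiptail (R : pzRingType) (q m : nat -> nat)
  (M : forall l, 'M[R]_(dimL q m l.-1, dimL q m l))
  (S : forall l, 'M[R]_(dimL q m l.-1, sdimL q m l)) (n : nat)
  : 'M[R]_(dimL q m 0, ssum q m n) :=
  match n return 'M[R]_(dimL q m 0, ssum q m n) with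
  | 0 => 0
  | n'.+1 => row_mx (@chain _ _ _ M n' *m S n'.+1) (@skiptail _ _ _ M S n')
  end.

Definition skipmx (R : pzRingType) (q m : nat -> nat)
  (M : forall l, 'M[R]_(dimL q m l.-1, dimL q m l))
  (S : forall l, 'M[R]_(dimL q m l.-1, sdimL q m l)) (kappa : nat)
  : 'M[R]_(dimL q m 0, dimL q m kappa + ssum q m kappa) :=
  row_mx (@chain _ _ _ M kappa) (@skiptail _ _ _ M S kappa).

Fixpoint enc (R : pzRingType) (q m : nat -> nat)
  (E : forall l, 'M[R]_(dimL q m l.-1, dimL q m l)) (x : 'cV[R]_(dimL q m 0))
  (n : nat) : 'cV[R]_(dimL q m n) :=
  match n return 'cV[R]_(dimL q m n) with
  | 0 => x
  | n'.+1 => (E n'.+1)^T *m @enc _ _ _ E x n'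
  end.

Fixpoint dec (R : pzRingType) (q m : nat -> nat)
  (D : forall l, 'M[R]_(dimL q m l.-1, dimL q m l)) (n : nat)
  : 'cV[R]_(dimL q m n) -> 'cV[R]_(dimL q m 0) :=
  match n return 'cV[R]_(dimL q m n) -> 'cV[R]_(dimL q m 0) with
  | 0 => fun v => v
  | n'.+1 => fun v => @dec _ _ _ D n' (D n'.+1 *m v)
  end.

Fixpoint decskp (R : pzRingType) (q m : nat -> nat)
  (E D : forall l, 'M[R]_(dimL q m l.-1, dimL q m l))
  (S tS : forall l, 'M[R]_(dimL q m l.-1, sdimL q m l))
  (x : 'cV[R]_(dimL q m 0)) (n : nat)
  : 'cV[R]_(dimL q m n) -> 'cV[R]_(dimL q m 0) :=
  match n return 'cV[R]_(dimL q m n) -> 'cV[R]_(dimL q m 0) with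
  | 0 => fun v => v
  | n'.+1 => fun v =>
      @decskp _ _ _ E D S tS x n' (D n'.+1 *m v + tS n'.+1 *m ((S n'.+1)^T *m @enc _ _ _ E x n'))
  end.

Definition Fnet (R : pzRingType) (q m : nat -> nat)
  (E D : forall l, 'M[R]_(dimL q m l.-1, dimL q m l)) (kappa : nat)
  (x : 'cV[R]_(dimL q m 0)) : 'cV[R]_(dimL q m 0) :=
  @dec _ _ _ D kappa (@enc _ _ _ E x kappa).

Definition Fskp (R : pzRingType) (q m : nat -> nat)
  (E D : forall l, 'M[R]_(dimL q m l.-1, dimL q m l))
  (S tS : forall l, 'M[R]_(dimL q m l.-1, sdimL q m l)) (kappa : nat)
  (x : 'cV[R]_(dimL q m 0)) : 'cV[R]_(dimL q m 0) :=
  @decskp _ _ _ E D S tS x kappa (@enc _ _ _ E x kappa).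

Arguments vget {R m}.
Arguments zpad {R} m {r}.
Arguments cconv {R m}.
Arguments mxconv {R m p r}.
Arguments Emx {R r q m}.
Arguments Dmx {R r q m}.
Arguments Smx {R r q} m.
Arguments tSmx {R r q} m.
Arguments Psimx {R r q}.
Arguments tPsimx {R r q}.
Arguments chain {R q m}.
Arguments skiptail {R q m}.
Arguments skipmx {R q m}.
Arguments enc {R q m}.
Arguments dec {R q m}.
Arguments decskp {R q m}.
Arguments Fnet {R q m}.
Arguments Fskp {R q m}.

(* A convolution A [conv] psi with a filter of length r <= m is the product
   circ m psi *m A with the circulant matrix of the zero-padded filter.  If
   the filter pairs (tpsi_{j,k}, psi_{k,j'}) satisfy the frame condition
   Psi tPsi^T = c I, then summing the products of their circulant matrices
   over k gives (j == j') c r I, because each index of Z/mZ lies in exactly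
   r of the cyclic windows of length r.  Combined with tPhi Phi^T = a I this
   shows that each layer pair is a scaled tight frame:
   D^l E^l^T = a c r I  (and likewise tS^l S^l^T = c r I, with Phi = I).

   The network part is pure matrix algebra: the encoder computes
   (E^1...E^n)^T x, the decoder multiplies by D^1...D^n, and the skipped
   connections contribute D^1...D^l tS^{l+1} S^{l+1}^T (E^1...E^l)^T x.
   Layer identities telescope along the chains, which gives
   tB B^T = I, resp. tBskp Bskp^T = I, and the frame expansion of x in
   the columns of B, tB is just the identity tB B^T x = x. *)

From HB Require Import structures.
From mathcomp Require Import all_boot all_order all_algebra.
From mathcomp Require Import ring.
Import Order.TTheory GRing.Theory Num.Theory.
Local Open Scope ring_scope.

Section BlockScalar.
Variable R : pzRingType.

Lemma mxblock_scalarP (n p : nat) (B : 'I_n -> 'I_n -> 'M[R]_p) (a : R) :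
  (forall i j, B i j = ((i == j)%:R * a)%:M) <->
  \mxblock_(i < n, j < n) B i j = a%:M.
Proof.
rewrite -(mxdiagZ (p_ := fun _ : 'I_n => p)) /mxdiag -eq_mxblockP.
by split=> H i j; rewrite H; case: eqP => _; rewrite ?conform_mx_id ?mul1r ?mul0r ?raddf0.
Qed.
End BlockScalar.

Section Circulant.
Variable R : comPzRingType.

Lemma vgetE {r} (v : 'cV[R]_r) i (lt_ir : (i < r)%N) : vget v i = v (Ordinal lt_ir) 0.
Proof. by rewrite /vget insubT. Qed.

Lemma vget_ge {r} (v : 'cV[R]_r) i : (r <= i)%N -> vget v i = 0.
Proof. by move=> le_ri; rewrite /vget insubF // ltnNge le_ri. Qed.

Definition cshift {m : nat} (n t : 'I_m) : nat := ((n + m - t) %% m)%N.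

Lemma cshift_lt {m} (n t : 'I_m) : (cshift n t < m)%N.
Proof. by rewrite ltn_pmod // (leq_ltn_trans _ (ltn_ord n)). Qed.

Lemma cshift_addK {m} (n t : 'I_m) : (cshift n t + t = n %[mod m])%N.
Proof.
rewrite /cshift modnDml subnK ?modnDr //.
by rewrite (leq_trans (ltnW (ltn_ord t))) ?leq_addl.
Qed.

Lemma cshift_inj {m} (n : 'I_m) : injective (cshift n).
Proof.
move=> t t' eq_tt'; apply/ord_inj/eqP.
rewrite -(modn_small (ltn_ord t)) -(modn_small (ltn_ord t')) -(eqn_modDl (cshift n t)).
by rewrite {2}eq_tt' !cshift_addK.
Qed.

Lemma cshift_eq {m} (n n' t : 'I_m) : (cshift n t == cshift n' t) = (n == n').
Proof.
apply/eqP/eqP => [eq_nn'|-> //]; apply/ord_inj/eqP.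
rewrite -(modn_small (ltn_ord n)) -(modn_small (ltn_ord n')).
by rewrite -(cshift_addK n t) -(cshift_addK n' t) eq_nn'.
Qed.

Lemma sum_cshift {m} (n : 'I_m) (F : nat -> R) :
  \sum_(t < m) F (cshift n t) = \sum_(u < m) F u.
Proof.
pose sh (t : 'I_m) : 'I_m := Ordinal (cshift_lt n t).
have sh_inj : injective sh by move=> t t' /(congr1 val) /cshift_inj.
by rewrite [RHS](reindex_inj sh_inj).
Qed.

Lemma sum_window m r : (r <= m)%N -> \sum_(u < m) ((u < r)%N)%:R = r%:R :> R.
Proof.
move=> le_rm; rewrite (eq_bigr (fun u : 'I_m => if (u < r)%N then 1 else 0)).
  by rewrite -big_mkcond -(big_ord_widen _ (fun _ => 1) le_rm) sumr_const card_ord.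
by move=> u _; case: ltnP.
Qed.

Definition circ (m : nat) {r} (psi : 'cV[R]_r) : 'M[R]_m :=
  \matrix_(n, t) vget psi (cshift n t).

Lemma mxconv_circ m p r (A : 'M[R]_(m, p)) (psi : 'cV[R]_r) :
  mxconv A psi = circ m psi *m A.
Proof.
apply/matrixP => i j; rewrite !mxE; apply: eq_bigr => k _.
rewrite !mxE mulrC /vget insubT ?cshift_lt // => lt_km.
by rewrite mxE.
Qed.

(* Entry (n, n') is
   sum_t c [n - t = n' - t < r], which is c r if n = n' and 0 otherwise. *)
Lemma circ_frame m r s (u v : 'I_s -> 'cV[R]_r) (c : R) : (r <= m)%N ->
  \sum_k u k *m (v k)^T = c%:M ->
  \sum_k circ m (u k) *m (circ m (v k))^T = (c * r%:R)%:M.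
Proof.
move=> le_rm uv_frame.
have uv_entry i i' : \sum_k vget (u k) i * vget (v k) i' = ((i == i') && (i < r)%N)%:R * c.
  have [lt_ir|le_ri] := ltnP i r; last first.
    by rewrite andbF mul0r big1 // => k _; rewrite vget_ge ?mul0r.
  have [lt_i'r|le_ri'] := ltnP i' r; last first.
    rewrite andbT big1 => [|k _]; last by rewrite (vget_ge _ _ le_ri') mulr0.
    by case: eqP => [eq_ii'|]; [move: lt_ir; rewrite eq_ii' ltnNge le_ri'|rewrite mul0r].
  move/matrixP/(_ (Ordinal lt_ir) (Ordinal lt_i'r)): uv_frame.
  rewrite summxE !mxE andbT mulr_natl => <-; apply: eq_bigr => k _.
  by rewrite !mxE big_ord1 !mxE !vgetE.
apply/matrixP => n n'; rewrite summxE !mxE.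
under eq_bigr do rewrite mxE.
under eq_bigr do under eq_bigr do rewrite !mxE.
rewrite exchange_big /=.
under eq_bigr do rewrite uv_entry cshift_eq.
case: (eqVneq n n') => _ /=; last by rewrite big1 // => t _; rewrite mul0r.
rewrite -mulr_suml (sum_cshift n (fun u => ((u < r)%N)%:R)) sum_window //.
by rewrite mulr1n mulrC.
Qed.
End Circulant.

Arguments circ {R} m {r}.
Arguments circ_frame {R m r s u v c}.

Section ConvolutionFrame.
Variable R : comPzRingType.

Lemma filter_frame (qp qn r : nat) (psi : 'I_qn -> 'I_qp -> 'cV[R]_r)
    (tpsi : 'I_qp -> 'I_qn -> 'cV[R]_r) (c : R) :
  (\mxblock_(k < qp, j < qn) psi j k) *m (\mxblock_(j < qp, k < qn) tpsi j k)^T = c%:M ->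
  forall j k', \sum_k tpsi j k *m (psi k k')^T = ((j == k')%:R * c)%:M.
Proof.
rewrite tr_mxblock mul_mxblock -mxblock_scalarP => Psi_frame j k'.
rewrite -[LHS]trmxK raddf_sum -tr_scalar_mx eq_sym -Psi_frame.
by congr (_^T); apply: eq_bigr => k _; rewrite /= trmx_mul trmxK.
Qed.

Lemma conv_block_frame (mp mn qp qn r : nat) (Phi tPhi : 'M[R]_(mp, mn))
    (psi : 'I_qn -> 'I_qp -> 'cV[R]_r) (tpsi : 'I_qp -> 'I_qn -> 'cV[R]_r) (a c : R) :
  (r <= mp)%N -> tPhi *m Phi^T = a%:M ->
  (\mxblock_(k < qp, j < qn) psi j k) *m (\mxblock_(j < qp, k < qn) tpsi j k)^T = c%:M ->
  (\mxblock_(j < qp, k < qn) mxconv tPhi (tpsi j k)) *m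
     (\mxblock_(k < qp, j < qn) mxconv Phi (psi j k))^T = (a * (c * r%:R))%:M.
Proof.
move=> le_rm Phi_frame /filter_frame Psi_frame.
rewrite tr_mxblock mul_mxblock -mxblock_scalarP => j k'.
under eq_bigr do rewrite !mxconv_circ trmx_mul mulmxA -(mulmxA _ tPhi) Phi_frame
  mul_mx_scalar -scalemxAl.
rewrite -scaler_sumr (circ_frame le_rm (Psi_frame j k')) scale_scalar_mx.
by congr (_%:M); ring.
Qed.
End ConvolutionFrame.

Lemma frame_expansion (R : comPzRingType) d p (B tB : 'M[R]_(d, p)) (x : 'cV[R]_d) :
  \sum_(i < p) ((col i B)^T *m x) 0 0 *: col i tB = tB *m B^T *m x.
Proof.
apply/matrixP => a b; rewrite (ord1 b) summxE -mulmxA mxE.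
apply: eq_bigr => i _; rewrite !mxE mulrC; congr (_ * _).
by apply: eq_bigr => k _; rewrite !mxE.
Qed.

Section LinearNetwork.
Variables (R : comPzRingType) (q m : nat -> nat).
Variables (E D : forall l, 'M[R]_(dimL q m l.-1, dimL q m l)).
Variables (S tS : forall l, 'M[R]_(dimL q m l.-1, sdimL q m l)).

Lemma enc_chain x n : enc E x n = (chain E n)^T *m x.
Proof.
elim: n => [|n IH] /=; first by rewrite trmx1 mul1mx.
by rewrite IH trmx_mul mulmxA.
Qed.

Lemma dec_chain n v : dec D n v = chain D n *m v.
Proof. by elim: n v => [|n IH] v /=; rewrite ?mul1mx // IH mulmxA. Qed.

Lemma Fnet_chain n x : Fnet E D n x = chain D n *m (chain E n)^T *m x.
Proof. by rewrite /Fnet dec_chain enc_chain mulmxA. Qed.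

Lemma chain_frame n : (forall l, (0 < l <= n)%N -> D l *m (E l)^T = 1%:M) ->
  chain D n *m (chain E n)^T = 1%:M.
Proof.
elim: n => [|n IH] layer_id /=; first by rewrite trmx1 mul1mx.
rewrite trmx_mul mulmxA -(mulmxA _ (D n.+1)) layer_id ?leqnn // mulmx1.
by apply: IH => l /andP[l_gt0 le_ln]; rewrite layer_id // l_gt0 ltnW.
Qed.

Definition skip_term l : 'M[R]_(dimL q m 0) :=
  chain D l *m tS l.+1 *m (S l.+1)^T *m (chain E l)^T.

Lemma decskp_chain x n v :
  decskp E D S tS x n v = chain D n *m v + \sum_(l < n) skip_term l *m x.
Proof.
elim: n v => [|n IH] v /=; first by rewrite big_ord0 addr0 mul1mx.
rewrite IH big_ord_recr /= enc_chain mulmxDr mulmxA -addrA [X in _ + X]addrC.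
by rewrite /skip_term !mulmxA.
Qed.

Lemma skiptail_gram n :
  skiptail D tS n *m (skiptail E S n)^T = \sum_(l < n) skip_term l.
Proof.
elim: n => [|n IH] /=; first by rewrite mul0mx big_ord0.
by rewrite tr_row_mx mul_row_col IH big_ord_recr /= addrC !trmx_mul /skip_term !mulmxA.
Qed.

Lemma skipmx_gram n : skipmx D tS n *m (skipmx E S n)^T =
  chain D n *m (chain E n)^T + \sum_(l < n) skip_term l.
Proof. by rewrite tr_row_mx mul_row_col skiptail_gram. Qed.

Lemma Fskp_skipmx n x :
  Fskp E D S tS n x = skipmx D tS n *m (skipmx E S n)^T *m x.
Proof.
by rewrite /Fskp decskp_chain enc_chain skipmx_gram mulmxDl mulmx_suml mulmxA.
Qed.

(* If every layer satisfies D^l E^l^T + tS^l S^l^T = I, then tBskp Bskp^T = I: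
   peeling off the last layer turns the last chain term and the last skip
   term back into the chain term of depth n. *)
Lemma skipmx_frame n :
  (forall l, (0 < l <= n)%N -> D l *m (E l)^T + tS l *m (S l)^T = 1%:M) ->
  skipmx D tS n *m (skipmx E S n)^T = 1%:M.
Proof.
rewrite skipmx_gram; elim: n => [|n IH] layer_id /=.
  by rewrite big_ord0 addr0 trmx1 mul1mx.
have peel : chain D n *m D n.+1 *m (chain E n *m E n.+1)^T + skip_term n =
            chain D n *m (chain E n)^T.
  transitivity
    (chain D n *m (D n.+1 *m (E n.+1)^T + tS n.+1 *m (S n.+1)^T) *m (chain E n)^T).
    by rewrite mulmxDr mulmxDl /skip_term trmx_mul !mulmxA.
  by rewrite layer_id ?leqnn // mulmx1.
rewrite big_ord_recr /= addrCA peel addrC IH // => l /andP[l_gt0 le_ln].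
by rewrite layer_id // l_gt0 ltnW.
Qed.
End LinearNetwork.

Theorem proposition3 (R : realFieldType) (kappa r : nat) (q m : nat -> nat)
  (Phi : forall l, 'M[R]_(m l.-1, m l))
  (psi : forall l, 'I_(q l) -> 'I_(q l.-1) -> 'cV[R]_r)
  (tPhi : forall l, 'M[R]_(m l.-1, m l))
  (tpsi : forall l, 'I_(q l.-1) -> 'I_(q l) -> 'cV[R]_r)
  (alpha : R) :
  (0 < kappa)%N -> (0 < r)%N -> (forall l, (l <= kappa)%N -> (r <= m l)%N) ->
  0 < alpha ->
  let E := Emx Phi psi in
  let D := Dmx tPhi tpsi in
  let S := Smx m psi in
  let tS := tSmx m tpsi in
  (* (1) no skipped connection *)
  ((forall l, (0 < l <= kappa)%N ->
      tPhi l *m (Phi l)^T = alpha%:M /\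
      Psimx psi l *m (tPsimx tpsi l)^T = (r%:R * alpha)^-1%:M) ->
    let B := chain E kappa in
    let tB := chain D kappa in
    tB *m B^T = 1%:M /\
    (forall x : 'cV[R]_(dimL q m 0),
       x = \sum_(i < dimL q m kappa) ((col i B)^T *m x) 0 0 *: col i tB) /\
    (forall x : 'cV[R]_(dimL q m 0), Fnet E D kappa x = tB *m B^T *m x))
  /\
  (* (2) with skipped connections *)
  ((forall l, (0 < l <= kappa)%N ->
      tPhi l *m (Phi l)^T = alpha%:M /\
      Psimx psi l *m (tPsimx tpsi l)^T = (r%:R * (alpha + 1))^-1%:M) ->
    let Bskp := skipmx E S kappa in
    let tBskp := skipmx D tS kappa in
    (forall x : 'cV[R]_(dimL q m 0),
       Fskp E D S tS kappa x = tBskp *m Bskp^T *m x) /\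
    tBskp *m Bskp^T = 1%:M /\
    (forall x : 'cV[R]_(dimL q m 0),
       x = \sum_(i < dimL q m kappa + ssum q m kappa)
             ((col i Bskp)^T *m x) 0 0 *: col i tBskp)).
Proof.
move=> _ r_gt0 le_rm alpha_gt0 E D S tS.
have le_r l : (0 < l <= kappa)%N -> (r <= m l.-1)%N.
  by case/andP=> _ le_lk; rewrite le_rm // (leq_trans (leq_pred l)).
have r_neq0 : r%:R != 0 :> R by rewrite pnatr_eq0 -lt0n.
have DE_frame l c : (0 < l <= kappa)%N -> tPhi l *m (Phi l)^T = alpha%:M ->
    Psimx psi l *m (tPsimx tpsi l)^T = c%:M -> D l *m (E l)^T = (alpha * (c * r%:R))%:M.
  by move=> /le_r; exact: conv_block_frame.
have SS_frame l c : (0 < l <= kappa)%N ->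
    Psimx psi l *m (tPsimx tpsi l)^T = c%:M -> tS l *m (S l)^T = (1 * (c * r%:R))%:M.
  by move=> /le_r le_rl; apply: conv_block_frame; rewrite // trmx1 mulmx1.
split=> [frame B tB | frame Bskp tBskp].
  have gram : tB *m B^T = 1%:M.
    apply: chain_frame => l /[dup] l_in /frame[Phi_l Psi_l].
    by rewrite (DE_frame _ _ l_in Phi_l Psi_l); congr (_%:M); field; rewrite r_neq0 gt_eqF.
  split=> //; split=> x; first by rewrite frame_expansion gram mul1mx.
  by rewrite Fnet_chain.
have gram : tBskp *m Bskp^T = 1%:M.
  apply: skipmx_frame => l /[dup] l_in /frame[Phi_l Psi_l].
  rewrite (DE_frame _ _ l_in Phi_l Psi_l) (SS_frame _ _ l_in Psi_l) -raddfD /=.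
  congr (_%:M); field.
  by rewrite r_neq0 gt_eqF ?(lt_le_trans alpha_gt0) ?lerDl.
split=> [x|]; first exact: Fskp_skipmx.
by split=> // x; rewrite frame_expansion gram mul1mx.
Qed.
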